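(* Let $r \ge 3$ and $b \in \{0,1\}$. For $n \ge 1$ let $g^{b\text{-}\mathrm{ff}}_r(n)$ be the maximum cardinality of a family $\mathcal{F} \subseteq \{0,1\}^n$ containing no $b$-focal family of size $r$. Then for every $n$, $$g^{b\text{-}\mathrm{ff}}_r(n) \le (r-1)\sum_{k=0}^n \frac{\binom{n}{\lceil \frac{(r-2)k}{r-1}\rceil}}{\binom{k}{\lceil \frac{(r-2)k}{r-1}\rceil}},$$ and this sum equals $\left(1 + \frac{r-2}{(r-1)^{\frac{r-1}{r-2}}} + o(1)\right)^n$ as $n \to \infty$.
   Context: For $b \in \{0,1\}$, a family $x^{(0)}, x^{(1)}, \dots, x^{(r-1)}$ of $r$ distinct vectors in $\{0,1\}^n$ is $b$-focal with focus $x^{(0)}$ if for every coordinate $i \in [n]$ with $x^{(0)}_i = b$, at least $r-2$ of the $r-1$ entries $x^{(1)}_i, \dots, x^{(r-1)}_i$ are equal to $b$. A family contains a $b$-focal family of size $r$ if some $r$ distinct members, with some choice of focus among them, form a $b$-focal family. *)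

From HB Require Import structures.
From mathcomp Require Import all_boot all_order all_algebra.
From mathcomp Require Import all_classical all_reals all_analysis.
Set Implicit Arguments. Unset Strict Implicit. Unset Printing Implicit Defensive.
Import Order.TTheory GRing.Theory Num.Theory.

(* Vectors in {0,1}^n, with 1 = true and 0 = false. *)
Definition bvec (n : nat) := {ffun 'I_n -> bool}.

Definition is_focal (n r : nat) (b : bool) (S : {set bvec n}) (x0 : bvec n) : bool :=
  [&& #|S| == r, x0 \in S &
      [forall i : 'I_n, (x0 i == b) ==>
         (r - 2 <= #|[set y in S :\ x0 | y i == b]|)%N]].

Definition contains_focal (n r : nat) (b : bool) (F : {set bvec n}) : bool :=
  [exists S : {set bvec n}, (S \subset F) &&
     [exists x0 : bvec n, is_focal r b S x0]].

Definition g_ff (r : nat) (b : bool) (n : nat) : nat :=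
  \max_(F : {set bvec n} | ~~ contains_focal r b F) #|F|.

(* ceil((r-2) k / (r-1)) *)
Definition mk (r k : nat) : nat := ((r - 2) * k + (r - 2)) %/ (r - 1).

Local Open Scope ring_scope.

Definition focal_sum (R : realType) (r n : nat) : R :=
  \sum_(0 <= k < n.+1) ('C(n, mk r k))%:R / ('C(k, mk r k))%:R.

Definition focal_base (R : realType) (r : nat) : R :=
  1 + (r - 2)%:R / ((r - 1)%:R `^ ((r - 1)%:R / (r - 2)%:R)).

(* Split a family F with no b-focal family of size r into layers F_k by the
   size k of the b-support (set of coordinates equal to b) and let
   m = ceil((r-2)k/(r-1)).  Call an m-subset of the b-support of x in F_k
   private if no other member of F_k has it in its b-support.  Since
   (r-1)(k-m) <= k, there are r-1 m-subsets of a k-set any two of which cover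
   it; if x had fewer than C(k,m)/(r-1) private sets, a permutation of its
   b-support would make all r-1 of them non-private, and members of F_k
   containing them would form a b-focal family with focus x.  Private sets of
   distinct members are distinct, so |F_k| C(k,m) <= (r-1) C(n,m).

   For the asymptotics put w = (r-1)^(1/(r-2)) and z = (r-2)/((r-1)w), so
   that 1 + z is the claimed base.  Since m is the mode of the binomial
   expansion of (1 + (r-2))^k and w^m is within a factor r-1 of (r-1)^(k-m),
   each term C(n,m)/C(k,m) lies between C(n,m) z^m and (r-1)(k+1) C(n,m) z^m.
   Hence the sum lies between (1+z)^n/(n+1) and (r-1)(n+1)^2 (1+z)^n, and its
   n-th root tends to 1 + z. *)

From HB Require Import structures.
From mathcomp Require Import all_boot all_order all_algebra all_fingroup.
From mathcomp Require Import all_classical all_reals all_analysis.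
From mathcomp Require Import zify ring lra.
From mathcomp Require Import fintype finset.
Import Order.TTheory GRing.Theory Num.Theory numFieldNormedType.Exports.
Set Implicit Arguments. Unset Strict Implicit. Unset Printing Implicit Defensive.

Lemma sum_bool_card (I : finType) (A : {pred I}) (b : pred I) :
  \sum_(i in A) b i = #|[set i in A | b i]|.
Proof.
rewrite -sum1_card [RHS]big_mkcond [LHS]big_mkcond; apply: eq_bigr => i _.
by rewrite !inE; case: (i \in A).
Qed.

Section SubsetsOfAFiniteSet.
Variables (T : finType) (X : {set T}).

Lemma Sym_imset_transitive (A B : {set T}) :
  A \subset X -> B \subset X -> #|A| = #|B| -> exists2 s, s \in Sym X & s @: A = B.
Proof.
move=> sAX sBX cAB.
pose list_of (C : {set T}) := enum C ++ enum (X :\: C) ++ enum (~: X).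
have mem_list C t : t \in list_of C.
  by rewrite !mem_cat !mem_enum !inE; case: (t \in C); case: (t \in X).
have cXA : #|X :\: A| = #|X :\: B|.
  by rewrite !cardsD (setIidPr sAX) (setIidPr sBX) cAB.
have size_lists : size (list_of A) = size (list_of B).
  by rewrite !size_cat -!cardE cAB cXA.
have uniq_listB : uniq (list_of B).
  rewrite !cat_uniq !enum_uniq /= !has_cat !negb_or andbT -!andbA.
  by apply/and3P; split; apply/hasPn => t; rewrite !mem_enum !inE;
    move: (subsetP sBX t); case: (t \in B); case: (t \in X) => //= ->.
(* [f] maps [list_of A] pointwise onto [list_of B]; both enumerate [T]. *)
pose f t := nth t (list_of B) (index t (list_of A)).
have f_inj : injective f.
  move=> t u; rewrite /f.
  have idx v : index v (list_of A) < size (list_of B) by rewrite -size_lists index_mem.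
  rewrite (set_nth_default u) // => /eqP; rewrite nth_uniq // => /eqP eq_idx.
  by rewrite -(nth_index t (mem_list A t)) eq_idx (set_nth_default t) ?size_lists // nth_index.
exists (perm f_inj).
  rewrite inE; apply/subsetP => t; rewrite !inE permE /f; apply: contraR => tX.
  have tA : t \notin A by apply: contra tX => /(subsetP sAX).
  rewrite index_cat mem_enum (negbTE tA) index_cat mem_enum !inE (negbTE tX) andbF.
  rewrite nth_cat -!cardE cAB ltnNge leq_addr /= addKn.
  rewrite nth_cat -!cardE cXA ltnNge leq_addr /= addKn.
  by rewrite nth_index // mem_enum inE.
apply/eqP; rewrite eqEcard (card_imset _ (@perm_inj _ _)) cAB leqnn andbT.
apply/subsetP => u /imsetP [t tA ->]; rewrite permE /f index_cat mem_enum tA.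
have it : index t (enum A) < size (enum B) by rewrite -cardE -cAB cardE index_mem mem_enum.
by rewrite nth_cat it -(mem_enum (mem B)) mem_nth.
Qed.

(* [t0] is only a default value for [nth]; [D j] is [X] minus the [j]-th of
   [q] disjoint blocks of [#|X| - m] consecutive elements of [enum X]. *)
Lemma pairwise_covering_subsets (t0 : T) q m :
  m <= #|X| -> q * (#|X| - m) <= #|X| ->
  exists D : 'I_q -> {set T},
    (forall j, D j \subset X /\ #|D j| = m) /\
    (forall j j', j != j' -> X \subset D j :|: D j').
Proof.
move=> mX qX; set s := #|X| - m; set e := enum X.
pose E (j : 'I_q) := [set u in map (nth t0 e) (iota (j * s) s)].
have in_e (j : 'I_q) i : i \in iota (j * s) s -> i < size e.
  rewrite mem_iota -cardE => /andP [_ lt_i]; apply: (leq_trans lt_i).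
  by apply: leq_trans qX; rewrite -mulSnr leq_mul2r (ltn_ord j) orbT.
have nth_eqE (j j' : 'I_q) i i' : i \in iota (j * s) s -> i' \in iota (j' * s) s ->
    (nth t0 e i == nth t0 e i') = (i == i').
  by move=> ij i'j'; rewrite nth_uniq ?enum_uniq ?(in_e j i ij) ?(in_e j' i' i'j').
exists (fun j => X :\: E j); split=> [j | j j' neq_jj'].
  have sEX : E j \subset X.
    by apply/subsetP => u; rewrite inE => /mapP [i /in_e ie ->]; rewrite -mem_enum mem_nth.
  have cE : #|E j| = s.
    rewrite cardsE (card_uniqP _) ?size_map ?size_iota //.
    by rewrite map_inj_in_uniq ?iota_uniq // => i i' ij i'j /eqP; rewrite (nth_eqE j j) // => /eqP.
  by rewrite subsetDl cardsD (setIidPr sEX) cE subKn.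
apply/subsetP => u uX; rewrite !inE uX !andbT -negb_and.
apply/negP => /andP [] /mapP [i ij ->] /mapP [i' i'j' /eqP].
rewrite (nth_eqE j j') // => /eqP eq_ii'; move: ij i'j'; rewrite eq_ii' !mem_iota.
move=> /andP [lo hi] /andP [lo' hi']; move/eqP: neq_jj'; apply; apply: val_inj => /=.
nia.
Qed.

Variables (m : nat) (P : {set {set T}}).

Let hits (B : {set T}) := \sum_(s in Sym X) (s @: B \in P).

Let hits_eq (B B' : {set T}) : B \subset X -> B' \subset X -> #|B| = #|B'| -> hits B = hits B'.
Proof.
move=> sBX sB'X cBB'; have [t tSym tB'] := Sym_imset_transitive sB'X sBX (esym cBB').
rewrite /hits [RHS](reindex_inj (mulgI t)) /=; apply: eq_big => [s | s _].
  by rewrite groupMl.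
by rewrite -tB' -imset_comp; congr (_ \in P); apply: eq_imset => u /=; rewrite permM.
Qed.

Let hits_bound (B : {set T}) :
  B \subset X -> #|B| = m -> hits B * 'C(#|X|, m) <= #|Sym X| * #|P|.
Proof.
move=> sBX cB; rewrite -cards_draws mulnC -sum_nat_const.
have hits_all (s : {perm T}) : \sum_(B' : {set T}) (s @: B' \in P) = #|P|.
  transitivity (\sum_(C : {set T}) (C \in P)).
    by rewrite [RHS](reindex_inj (imset_inj (@perm_inj _ s))).
  by rewrite sum_bool_card; apply: eq_card => C; rewrite !inE.
apply: leq_trans (_ : \sum_(B' : {set T}) hits B' <= _).
  rewrite [X in X <= _]big_mkcond; apply: leq_sum => B' _; rewrite inE.
  by case: ifP => // /andP [sB'X /eqP cB']; rewrite (hits_eq sBX sB'X) ?cB.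
by rewrite /hits exchange_big /= -sum_nat_const; apply: leq_sum => s _; rewrite hits_all.
Qed.

(* Averaging over [Sym X]: since [Sym X] is transitive on [m]-subsets, each
   [D j] is moved into [P] by at most [#|Sym X| * #|P| / 'C(#|X|, m)]
   permutations, so some permutation moves none of the [q] sets into [P]. *)
Lemma exists_pairwise_covering_avoiding (t0 : T) q :
  m <= #|X| -> q * (#|X| - m) <= #|X| -> q * #|P| < 'C(#|X|, m) ->
  exists Y : 'I_q -> {set T},
    (forall j, [/\ Y j \subset X, #|Y j| = m & Y j \notin P]) /\
    (forall j j', j != j' -> X \subset Y j :|: Y j').
Proof.
move=> mX qX ltP; have [D [DX Dcover]] := pairwise_covering_subsets t0 mX qX.
have Sym_gt0 : 0 < #|Sym X| by apply/card_gt0P; exists 1%g; apply: group1.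
have hits_lt : \sum_(j < q) hits (D j) < #|Sym X|.
  rewrite -(ltn_pmul2r (_ : 0 < 'C(#|X|, m))) ?bin_gt0 // big_distrl /=.
  apply: (@leq_ltn_trans (\sum_(j < q) #|Sym X| * #|P|)).
    by apply: leq_sum => j _; apply: hits_bound; case: (DX j).
  by rewrite sum_nat_const card_ord mulnCA ltn_pmul2l.
have [s sSym sD] : exists2 s, s \in Sym X & forall j, s @: D j \notin P.
  have : ~~ [forall (s | s \in Sym X), 0 < \sum_(j < q) (s @: D j \in P)].
    apply: contraL hits_lt => /forall_inP pos; rewrite -leqNgt -sum1_card /hits exchange_big.
    by apply: leq_sum => s /pos.
  rewrite negb_forall_in => /exists_inP [s sSym]; rewrite lt0n negbK sum_nat_eq0.
  by move=> /forallP sD; exists s => // j; have := sD j; rewrite implyTb eqb0.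
have sX : s @: X = X by apply: im_perm_on; rewrite inE in sSym.
exists (fun j => s @: D j); split=> [j | j j' neq_jj'].
  have [sDX cD] := DX j.
  by rewrite -sX imsetS // card_imset ?cD //; apply: perm_inj.
by rewrite -imsetU -{1}sX imsetS // Dcover.
Qed.

End SubsetsOfAFiniteSet.

Lemma unit_steps_surj (f : nat -> nat) n j :
  f 0 = 0 -> (forall i, f i.+1 <= (f i).+1) -> j <= f n -> exists2 k, k <= n & f k = j.
Proof.
move=> f0 fS; elim: n j => [|n IHn] j le_j; first by exists 0; move: le_j; rewrite f0 leqn0 => /eqP.
have [/IHn [k le_kn fk] | lt_fn_j] := leqP j (f n); first by exists k; rewrite ?leqW.
by exists n.+1 => //; apply/eqP; rewrite eqn_leq le_j (leq_trans (fS n)).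
Qed.

Lemma mk_bounds r k :
  3 <= r -> (r - 2) * k <= (r - 1) * mk r k <= (r - 2) * k + (r - 2).
Proof.
move=> r3; rewrite /mk; set a := (r - 2) * k + (r - 2).
have := divn_eq a (r - 1); have := ltn_pmod a (_ : 0 < r - 1).
move=> /(_ ltac:(lia)); rewrite /a; nia.
Qed.

Lemma mk_le r k : 3 <= r -> mk r k <= k.
Proof. by move=> r3; have := mk_bounds k r3; nia. Qed.

Lemma mk0 r : 3 <= r -> mk r 0 = 0.
Proof. by move=> r3; have := mk_bounds 0 r3; nia. Qed.

Lemma mkS_le r k : 3 <= r -> mk r k.+1 <= (mk r k).+1.
Proof. by move=> r3; have := mk_bounds k r3; have := mk_bounds k.+1 r3; nia. Qed.

Section FocalFreeFamilies.
Variables (n r : nat) (b : bool).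
Hypothesis r3 : 3 <= r.

Definition bsupp (x : bvec n) : {set 'I_n} := [set i | x i == b].

Lemma bsupp_inj : injective bsupp.
Proof.
move=> x y /setP eq_xy; apply/ffunP => i; have := eq_xy i; rewrite !inE.
by case: (x i); case: (y i); case: b.
Qed.

Lemma contains_focal_of_covers (F : {set bvec n}) x (y : 'I_(r - 1) -> bvec n) :
  x \in F -> injective y -> (forall j, y j \in F /\ y j != x) ->
  (forall j j', j != j' -> bsupp x \subset bsupp (y j) :|: bsupp (y j')) ->
  contains_focal r b F.
Proof.
move=> xF y_inj yF cover; pose S := x |: [set y j | j in 'I_(r - 1)].
have x_notin_y : x \notin [set y j | j in 'I_(r - 1)].
  by apply/imsetP => -[j _ eq_xy]; have [_] := yF j; rewrite -eq_xy eqxx.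
apply/existsP; exists S; apply/andP; split.
  apply/subsetP => u; rewrite !inE => /orP [/eqP -> // | /imsetP [j _ ->]].
  by case: (yF j).
apply/existsP; exists x; apply/and3P; split.
- rewrite cardsU1 x_notin_y card_imset // card_ord; apply/eqP; lia.
- exact: setU11.
apply/forallP => i; apply/implyP => xi.
pose J := [set j : 'I_(r - 1) | i \in bsupp (y j)].
have cardJ : r - 2 <= #|J|.
  have : #|~: J| <= 1.
    apply/card_le1_eqP => j j'; rewrite !inE => nj nj'; case: (eqVneq j j') => // /cover.
    by move/subsetP/(_ i); rewrite !inE xi (negbTE nj) (negbTE nj') => /(_ isT).
  by have := cardsC J; rewrite card_ord; lia.
apply: leq_trans cardJ _; rewrite -(card_imset _ y_inj); apply: subset_leq_card.
apply/subsetP => _ /imsetP [j jJ ->]; rewrite inE in jJ.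
by rewrite !inE imset_f ?orbT // andbT; case: (yF j) => _ ->; rewrite inE in jJ.
Qed.

Variable F : {set bvec n}.
Hypothesis focal_free : ~~ contains_focal r b F.

Definition layer k := [set x in F | #|bsupp x| == k].

Definition private_sets k x := [set B : {set 'I_n} | [&& B \subset bsupp x, #|B| == mk r k &
  [forall y in layer k, (y != x) ==> ~~ (B \subset bsupp y)]]].

Lemma private_sets_bound (i0 : 'I_n) k x :
  x \in layer k -> 'C(k, mk r k) <= (r - 1) * #|private_sets k x|.
Proof.
rewrite inE => /andP [xF /eqP card_x]; rewrite leqNgt; apply/negP => lt_priv.
have mk_le_k := mk_le k r3.
have codim : (r - 1) * (k - mk r k) <= k by have := mk_bounds k r3; nia.
have := exists_pairwise_covering_avoiding i0 (X := bsupp x) (m := mk r k)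
  (P := private_sets k x) (q := r - 1).
rewrite card_x => /(_ mk_le_k codim lt_priv) [Y [YP Ycover]].
have /fin_all_exists [y yP] : forall j, exists y : bvec n,
    [/\ y \in layer k, y != x & Y j \subset bsupp y].
  move=> j; have [sYx cardY] := YP j.
  rewrite inE sYx cardY eqxx /= negb_forall => /existsP [y].
  by rewrite negb_imply negb_imply negbK => /and3P [yk neq_yx sYy]; exists y.
have cover j j' : j != j' -> bsupp x \subset bsupp (y j) :|: bsupp (y j').
  move=> /Ycover /subset_trans; apply; apply: setUSS; [by case: (yP j) | by case: (yP j')].
apply: (negP focal_free); apply: (contains_focal_of_covers xF (y := y)) => //.
- move=> j j' eq_y; apply/eqP; apply: contraT => /cover; rewrite -eq_y setUid => sxy.
  have [yk neq_yx _] := yP j; move: yk; rewrite inE => /andP [_ /eqP card_y].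
  have /eqP /bsupp_inj eq_xy : bsupp x == bsupp (y j).
    by rewrite eqEcard sxy card_x card_y leqnn.
  by rewrite eq_xy eqxx in neq_yx.
- by move=> j; case: (yP j); rewrite inE => /andP [].
Qed.

Lemma card_layer_le (i0 : 'I_n) k :
  #|layer k| * 'C(k, mk r k) <= (r - 1) * 'C(n, mk r k).
Proof.
pose msets := [set B : {set 'I_n} | #|B| == mk r k].
apply: leq_trans (_ : (r - 1) * \sum_(x in layer k) #|private_sets k x| <= _).
  rewrite -sum_nat_const big_distrr /=.
  by apply: leq_sum => x; apply: private_sets_bound.
rewrite leq_mul2l; apply/orP; right.
have -> : 'C(n, mk r k) = #|msets| by rewrite card_draws card_ord.
have card_priv x : #|private_sets k x| = \sum_(B in msets) (B \in private_sets k x).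
  rewrite sum_bool_card; apply: eq_card => B; rewrite [in RHS]inE /= andb_idl //.
  by rewrite !inE; case/and3P.
rewrite (eq_bigr _ (fun x _ => card_priv x)) exchange_big /= -sum1_card.
apply: leq_sum => B _; rewrite sum_bool_card; apply/card_le1_eqP => x x'.
rewrite !inE => /andP [_ /and3P [_ _ /forall_inP privx]].
move=> /andP [/andP [x'F x'k] /and3P [sBx' _ _]].
apply/eqP; apply: contraLR sBx' => neq.
by apply: (implyP (privx x' _)); rewrite // inE x'F.
Qed.

Lemma card_layers : #|F| = \sum_(k < n.+1) #|layer k|.
Proof.
have one_layer (x : bvec n) : \sum_(k < n.+1) (#|bsupp x| == k) = 1.
  have lt_x : #|bsupp x| < n.+1 by rewrite ltnS -[n in _ <= n]card_ord max_card.
  rewrite (bigD1 (Ordinal lt_x)) //= eqxx big1 // => k neq_k.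
  by apply/eqP; rewrite eqb0; apply: contra neq_k => /eqP eq_k; apply/eqP/val_inj.
rewrite -sum1_card (eq_bigr _ (fun x _ => esym (one_layer x))) exchange_big /=.
by apply: eq_bigr => k _; rewrite sum_bool_card; apply: eq_card => x; rewrite !inE.
Qed.

End FocalFreeFamilies.

Local Open Scope classical_set_scope.
Local Open Scope ring_scope.

Lemma focal_sum_ge0 (R : realType) r n : 0 <= focal_sum R r n.
Proof. by apply: sumr_ge0 => k _; rewrite divr_ge0. Qed.

Lemma g_ff_le (R : realType) r b n : (3 <= r)%N -> (1 <= n)%N ->
  (g_ff r b n)%:R <= (r - 1)%:R * focal_sum R r n :> R.
Proof.
move=> r3 /(Ordinal (n := n)) i0.
have rhs_ge0 : 0 <= (r - 1)%:R * focal_sum R r n :> R by rewrite mulr_ge0 ?focal_sum_ge0.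
rewrite /g_ff; elim/big_ind: _ => // [x y | F focal_free]; first by rewrite /maxn; case: ifP.
rewrite (card_layers b F) natr_sum /focal_sum big_mkord mulr_sumr; apply: ler_sum => k _.
rewrite mulrA ler_pdivlMr ?ltr0n ?bin_gt0 ?mk_le // -!natrM ler_nat.
exact: card_layer_le.
Qed.

Section BinomialTerms.
Variable R : numDomainType.
Implicit Types z : R.

Lemma binom_term_le z n j : 0 <= z -> 'C(n, j)%:R * z ^+ j <= (1 + z) ^+ n.
Proof.
move=> z0; have [lt_jn | /bin_small ->] := ltnP j n.+1; last first.
  by rewrite mul0r exprn_ge0 // addr_ge0.
rewrite exprDn (bigD1 (Ordinal lt_jn)) //= expr1n mul1r mulr_natl lerDl.
by apply: sumr_ge0 => i _; rewrite expr1n mul1r mulrn_wge0 // exprn_ge0.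
Qed.

Lemma binom_termS z n j :
  j.+1%:R * ('C(n, j.+1)%:R * z ^+ j.+1) = (n - j)%:R * z * ('C(n, j)%:R * z ^+ j).
Proof. by rewrite exprS mulrA mulrA -natrM mul_bin_left natrM; ring. Qed.

Lemma binom_term_nondecreasing z n m : 0 <= z ->
  (forall j, (j < m)%N -> j.+1%:R <= (n - j)%:R * z) ->
  forall j, (j <= m)%N -> 'C(n, j)%:R * z ^+ j <= 'C(n, m)%:R * z ^+ m.
Proof.
move=> z0 up j le_jm; pose f i := 'C(n, i)%:R * z ^+ i.
have : {in [pred i | i <= m]%N &, {homo f : i k / (i <= k)%N >-> i <= k}}.
  apply: homo_leq_in => //; first by move=> ? ? ?; apply: le_trans.
    by move=> i k /= _ le_km i' /andP [_ /ltnW /leq_trans]; apply.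
  move=> i _; rewrite inE => lt_im.
  rewrite -(ler_pM2l (ltr0Sn _ i)) [X in _ <= X]binom_termS ler_wpM2r ?up //.
  by rewrite mulr_ge0 ?exprn_ge0.
by apply; rewrite ?inE.
Qed.

Lemma binom_term_nonincreasing z n m : 0 <= z ->
  (forall j, (m <= j)%N -> (n - j)%:R * z <= j.+1%:R) ->
  forall j, (m <= j)%N -> 'C(n, j)%:R * z ^+ j <= 'C(n, m)%:R * z ^+ m.
Proof.
move=> z0 down j le_mj; pose f i := 'C(n, i)%:R * z ^+ i.
have : {in [pred i | m <= i]%N &, {homo f : i k / (i <= k)%N >-> k <= i}}.
  apply: homo_leq_in => //; first by move=> y x t le_yx le_ty; apply: le_trans le_ty le_yx.
    by move=> i k; rewrite !inE => le_mi _ i' /andP [/ltnW /(leq_trans le_mi)].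
  move=> i; rewrite inE => le_mi _.
  rewrite -(ler_pM2l (ltr0Sn _ i)) binom_termS ler_wpM2r ?down //.
  by rewrite mulr_ge0 ?exprn_ge0.
by apply; rewrite ?inE.
Qed.

Lemma exp_le_max_term z n M :
  (forall j, (j <= n)%N -> 'C(n, j)%:R * z ^+ j <= M) -> (1 + z) ^+ n <= n.+1%:R * M.
Proof.
move=> le_M; rewrite exprDn mulr_natl -[X in _ *+ X]card_ord -sumr_const.
by apply: ler_sum => j _; rewrite expr1n mul1r -mulr_natl le_M // -ltnS.
Qed.

Lemma exp_le_mode z n m : 0 <= z ->
  (forall j, (j < m)%N -> j.+1%:R <= (n - j)%:R * z) ->
  (forall j, (m <= j)%N -> (n - j)%:R * z <= j.+1%:R) ->
  (1 + z) ^+ n <= n.+1%:R * ('C(n, m)%:R * z ^+ m).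
Proof.
move=> z0 up down; apply: exp_le_max_term => j _.
have [le_jm | /ltnW le_mj] := leqP j m.
  exact: binom_term_nondecreasing.
exact: binom_term_nonincreasing.
Qed.

End BinomialTerms.

Section RootLimit.
Variable R : realType.

Lemma powR_invnK (x : R) n : 0 <= x -> (0 < n)%N -> (x `^ n%:R^-1) ^+ n = x.
Proof.
move=> x0 n0; rewrite -powR_mulrn ?powR_ge0 // -powRrM mulVf ?powRr1 //.
by rewrite pnatr_eq0 -lt0n.
Qed.

Lemma mul_bin3_ge n : (8 <= n)%N -> (n * n.+1 ^ 2 <= 12 * 'C(n, 3))%N.
Proof.
move=> n8; have := bin_ffact n 3; rewrite !ffactnS ffactn0 /= => E.
have E' : ('C(n, 3) * 6 = n * (n.-1 * (n.-2 * 1)))%N by rewrite -E.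
nia.
Qed.

Lemma poly_lt_exp (c d : R) : 0 < d ->
  \forall n \near \oo, c * n.+1%:R ^+ 2 < (1 + d) ^+ n.
Proof.
move=> d0; have d3 : 0 < d ^+ 3 by rewrite exprn_gt0.
set K := 12%:R * c / d ^+ 3; exists (maxn 8 (Num.truncn K).+1) => // n /=.
rewrite geq_max => /andP [n8 nK].
have : K < n%:R by apply: lt_le_trans (truncnS_gt K) _; rewrite ler_nat.
rewrite ltr_pdivrMr // => ltK; rewrite -(ltr_pM2l (ltr0n _ 12)).
apply: (@lt_le_trans _ _ (d ^+ 3 * (n * n.+1 ^ 2)%:R)).
  have n2 : 0 < n.+1%:R ^+ 2 :> R by rewrite exprn_gt0.
  rewrite natrM natrX; nra.
apply: le_trans (_ : d ^+ 3 * (12 * 'C(n, 3))%:R <= _).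
  by rewrite ler_pM2l // ler_nat mul_bin3_ge.
by rewrite natrM mulrCA ler_pM2l ?ltr0n // mulrC binom_term_le ?ltW.
Qed.

Lemma root_cvg (a : nat -> R) (beta c : R) : 0 < beta -> 0 <= c ->
  (forall n, 0 <= a n) ->
  (forall n, beta ^+ n <= c * n.+1%:R ^+ 2 * a n) ->
  (forall n, a n <= c * n.+1%:R ^+ 2 * beta ^+ n) ->
  a n `^ n%:R^-1 @[n --> \oo] --> beta.
Proof.
move=> beta0 c0 a0 lower upper; apply/cvgrPdist_lt => e e0.
set d := e / beta; have d0 : 0 < d by rewrite divr_gt0.
have beta_e : beta * (1 + d) = beta + e by rewrite mulrDr mulr1 mulrCA divff ?mulr1 ?gt_eqF.
near=> n; set t := a n `^ n%:R^-1.
have n0 : (0 < n)%N by near: n; exists 1%N.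
have tn : t ^+ n = a n by apply: powR_invnK.
have t0 : 0 <= t by apply: powR_ge0.
have pe : c * n.+1%:R ^+ 2 < (1 + d) ^+ n by near: n; apply: poly_lt_exp.
have no_gap : ~ (beta ^+ n * (1 + d) ^+ n <= c * n.+1%:R ^+ 2 * beta ^+ n).
  by rewrite mulrC ler_pM2r ?exprn_gt0 // => /(lt_le_trans pe); rewrite ltxx.
have d1 : 0 <= 1 + d by rewrite addr_ge0 ?ltW.
rewrite ltr_distlC; apply/andP; split; rewrite ltNge; apply/negP => le_t; apply: no_gap.
  have shrink : t * (1 + d) <= beta.
    have ed : 0 <= e * d by rewrite mulr_ge0 ?ltW.
    apply: le_trans (_ : (beta - e) * (1 + d) <= _); first by rewrite ler_wpM2r.
    by rewrite mulrBl beta_e mulrDr mulr1; lra.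
  apply: le_trans (_ : c * n.+1%:R ^+ 2 * a n * (1 + d) ^+ n <= _).
    by apply: ler_wpM2r; [exact: exprn_ge0 | exact: lower].
  rewrite -tn -mulrA -exprMn; apply: ler_wpM2l; first by rewrite mulr_ge0 ?exprn_ge0.
  by apply: lerXn2r; rewrite ?nnegrE ?mulr_ge0 ?(ltW beta0).
rewrite -exprMn beta_e; apply: le_trans (upper n); rewrite -tn.
by apply: lerXn2r; rewrite ?nnegrE ?addr_ge0 ?(ltW beta0) ?(ltW e0).
Unshelve. all: by end_near.
Qed.
End RootLimit.

Section FocalSum.
Variables (R : realType) (r : nat).
Hypothesis r3 : (3 <= r)%N.

Let p := (r - 2)%N.
Let q := (r - 1)%N.
Let qE : q%:R = 1 + p%:R :> R.
Proof. by rewrite /q /p nat1r; congr (_%:R); lia. Qed.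
Let mk_boundsE k : (p * k <= q * mk r k <= p * k + p)%N.
Proof. exact: mk_bounds. Qed.

Let w : R := q%:R `^ p%:R^-1.
Let z : R := p%:R / (q%:R * w).

Let q_ge1 : 1 <= q%:R :> R.
Proof. by rewrite qE lerDl. Qed.

Let w_ge1 : 1 <= w.
Proof. by rewrite -(powRr0 q%:R); apply: ler_powR; rewrite ?invr_ge0. Qed.

Let w_gt0 : 0 < w.
Proof. exact: lt_le_trans ltr01 w_ge1. Qed.

Let z_ge0 : 0 <= z.
Proof. by rewrite divr_ge0 ?mulr_ge0 ?(ltW w_gt0). Qed.

Lemma focal_base_eq : focal_base R r = 1 + z.
Proof.
rewrite /focal_base /z -/p -/q; congr (1 + _ / _).
have -> : q%:R / p%:R = 1 + p%:R^-1 :> R.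
  have p0 : p%:R != 0 :> R by rewrite pnatr_eq0 /p; lia.
  by rewrite qE mulrDl mul1r divff // addrC.
rewrite powRD ?powRr1 //; apply/implyP => _.
by rewrite gt_eqF // (lt_le_trans ltr01 q_ge1).
Qed.

(* [w ^+ m = q ^ (m / p)] and [p * (k - m) <= m <= p * (k.+1 - m)] for [m = mk r k]. *)
Lemma w_pow_bounds k :
  q%:R ^+ (k - mk r k) <= w ^+ mk r k <= q%:R ^+ (k.+1 - mk r k).
Proof.
have -> : w ^+ mk r k = q%:R `^ ((mk r k)%:R / p%:R).
  by rewrite /w -powR_mulrn ?powR_ge0 // -powRrM mulrC.
have p0 : 0 < p%:R :> R by rewrite ltr0n /p; lia.
rewrite -!powR_mulrn ?ler0n //; apply/andP; split; apply: ler_powR => //.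
  by rewrite ler_pdivlMr // -natrM ler_nat; have := mk_boundsE k; nia.
by rewrite ler_pdivrMr // -natrM ler_nat; have := mk_boundsE k; nia.
Qed.

Let bin_mk_neq0 k : 'C(k, mk r k)%:R != 0 :> R.
Proof. by rewrite pnatr_eq0 -lt0n bin_gt0 mk_le. Qed.

Let zpowE m : z ^+ m = p%:R ^+ m / (q%:R ^+ m * w ^+ m).
Proof. by rewrite /z expr_div_n exprMn. Qed.

Let qw_gt0 m : 0 < q%:R ^+ m * w ^+ m.
Proof. by rewrite mulr_gt0 ?exprn_gt0 // (lt_le_trans ltr01 q_ge1). Qed.

Lemma bin_mk_zpow_le1 k : 'C(k, mk r k)%:R * z ^+ mk r k <= 1.
Proof.
have mk_le_k := mk_le k r3.
rewrite zpowE mulrA ler_pdivrMr // mul1r.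
apply: le_trans (_ : (1 + p%:R) ^+ k <= _); first exact: binom_term_le.
rewrite -qE -[in X in X <= _](subnKC mk_le_k) exprD.
apply: ler_wpM2l; first exact: exprn_ge0.
by case/andP: (w_pow_bounds k).
Qed.

Lemma bin_mk_zpow_ge1 k : 1 <= q%:R * k.+1%:R * ('C(k, mk r k)%:R * z ^+ mk r k).
Proof.
have mk_le_k := mk_le k r3.
rewrite zpowE !mulrA ler_pdivlMr // mul1r.
apply: le_trans (_ : q%:R * (1 + p%:R) ^+ k <= _).
  rewrite -qE -exprS -[in X in _ <= X](subnKC (leqW mk_le_k)) exprD.
  apply: ler_wpM2l; first exact: exprn_ge0.
  by case/andP: (w_pow_bounds k).
rewrite -!mulrA; apply: ler_wpM2l => //.
apply: exp_le_mode => // j; rewrite -natrM ler_nat; have := mk_boundsE k; nia.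
Qed.

Let ratio_ge_term n k :
  'C(n, mk r k)%:R * z ^+ mk r k <= 'C(n, mk r k)%:R / 'C(k, mk r k)%:R.
Proof.
have -> : 'C(n, mk r k)%:R * z ^+ mk r k =
    'C(n, mk r k)%:R / 'C(k, mk r k)%:R * ('C(k, mk r k)%:R * z ^+ mk r k).
  by rewrite mulrA divfK ?bin_mk_neq0.
by apply: ler_piMr; rewrite ?divr_ge0 ?bin_mk_zpow_le1.
Qed.

Let ratio_le_term n k : 'C(n, mk r k)%:R / 'C(k, mk r k)%:R <=
  q%:R * k.+1%:R * ('C(n, mk r k)%:R * z ^+ mk r k).
Proof.
have Ck := bin_mk_neq0 k.
have -> : q%:R * k.+1%:R * ('C(n, mk r k)%:R * z ^+ mk r k) =
    'C(n, mk r k)%:R / 'C(k, mk r k)%:R * (q%:R * k.+1%:R * ('C(k, mk r k)%:R * z ^+ mk r k)).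
  by field.
by apply: ler_peMr; rewrite ?divr_ge0 ?bin_mk_zpow_ge1.
Qed.

Let ratio_le_sum n k : (k <= n)%N ->
  'C(n, mk r k)%:R / 'C(k, mk r k)%:R <= focal_sum R r n.
Proof.
move=> le_kn; rewrite /focal_sum big_mkord (bigD1 (Ordinal (n := n.+1) le_kn)) //= lerDl.
by apply: sumr_ge0 => i _; rewrite divr_ge0.
Qed.

Lemma focal_sum_le n : focal_sum R r n <= q%:R * n.+1%:R ^+ 2 * (1 + z) ^+ n.
Proof.
have -> : q%:R * n.+1%:R ^+ 2 * (1 + z) ^+ n =
    \sum_(k < n.+1) q%:R * n.+1%:R * (1 + z) ^+ n.
  by rewrite sumr_const card_ord -mulr_natl; ring.
rewrite /focal_sum big_mkord; apply: ler_sum => k _; apply: le_trans (ratio_le_term n k) _.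
apply: ler_pM; rewrite ?mulr_ge0 ?exprn_ge0 ?binom_term_le //.
by rewrite ler_wpM2l // ler_nat.
Qed.

(* The terms [j <= mk r n] of [(1 + z) ^+ n] are of the form [j = mk r k];
   beyond [mk r n] they decrease since [z <= p / q]. *)
Lemma focal_sum_ge n : (1 + z) ^+ n <= n.+1%:R * focal_sum R r n.
Proof.
apply: exp_le_max_term => j le_jn; have [le_jM | /ltnW le_Mj] := leqP j (mk r n).
  have [k le_kn <-] := unit_steps_surj (mk0 r3) (fun i => mkS_le i r3) le_jM.
  exact: le_trans (ratio_ge_term n k) (ratio_le_sum le_kn).
apply: le_trans (ratio_le_sum (leqnn n)); apply: le_trans (ratio_ge_term n n).
apply: binom_term_nonincreasing => // i le_Mi.
apply: le_trans (_ : (n - i)%:R * (p%:R / q%:R) <= _).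
  by apply: ler_wpM2l => //; rewrite /z invfM mulrA ler_piMr ?divr_ge0 ?invf_le1.
have q0 : 0 < q%:R :> R by apply: lt_le_trans q_ge1.
rewrite mulrA ler_pdivrMr // -!natrM ler_nat; have := mk_boundsE n; nia.
Qed.

Lemma focal_sum_root_cvg :
  focal_sum R r n `^ n%:R^-1 @[n --> \oo] --> focal_base R r.
Proof.
rewrite focal_base_eq; apply: (@root_cvg _ _ _ q%:R) => // [|n|n|n].
- by apply: lt_le_trans ltr01 _; rewrite lerDl.
- exact: focal_sum_ge0.
- apply: le_trans (focal_sum_ge n) _; apply: ler_wpM2r; first exact: focal_sum_ge0.
  by rewrite -natrX -natrM ler_nat /q; nia.
- exact: focal_sum_le.
Qed.

End FocalSum.

Theorem corollary5p3 (R : realType) (r : nat) (b : bool) :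
  (3 <= r)%N ->
  (forall n : nat, (1 <= n)%N ->
     (g_ff r b n)%:R <= (r - 1)%:R * focal_sum R r n) /\
  (exists eps : nat -> R,
     eps n @[n --> \oo] --> (0 : R) /\
     forall n : nat, focal_sum R r n = (focal_base R r + eps n) ^+ n).
Proof.
move=> r3; split=> [n n1 | ]; first exact: g_ff_le.
exists (fun n => focal_sum R r n `^ n%:R^-1 - focal_base R r); split.
  by apply/subr_cvg0; apply: focal_sum_root_cvg.
case=> [|n]; first by rewrite expr0 /focal_sum big_nat1 mk0 // bin0 divr1.
by rewrite addrC subrK powR_invnK ?focal_sum_ge0.
Qed.
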